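(* Let $p$ be prime, $\mathbb{F}=\mathbb{F}_p$, and let $x,y,z\in\mathbb{F}^N$ satisfy $\sum_{t=1}^Nx(t)^iy(t)^az(t)^b=0$ for all $0\le a,b,i\le p-1$ (with the convention $0^0=1$). Then $$(S_{2p})_{y,z}(x)=\mathcal{H}\big(y^{(p)},z^{(p)}\big),$$ where $S_{2p}(x)=\sum_{T\subseteq[N],|T|=2p}\prod_{i\in T}x_i$.
   Context: Directional derivatives: $f_y(x)=f(x+y)-f(x)$, $f_{y,z}=(f_y)_z$. By definition $\mathcal{H}(y^{(p)},z^{(p)})=\sum_{1\le j_1<\dots<j_{2p}\le N}\ \sum_{\theta\subseteq[2p],|\theta|=p}\ \prod_{i\in\theta}y(j_i)\prod_{i\in[2p]\setminus\theta}z(j_i)$, where $y(j)$ is the $j$-th coordinate of $y$. *)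

From mathcomp Require Import all_boot all_order all_algebra.
Set Implicit Arguments. Unset Strict Implicit. Unset Printing Implicit Defensive.
Import GRing.Theory.
Local Open Scope ring_scope.

Definition S_sym (R : comRingType) (N k : nat) (x : 'I_N -> R) : R :=
  \sum_(T : {set 'I_N} | #|T| == k) \prod_(i in T) x i.

Definition dderiv (R : comRingType) (N : nat) (f : ('I_N -> R) -> R)
  (y : 'I_N -> R) : ('I_N -> R) -> R :=
  fun x => f (fun t => x t + y t) - f x.

(* H(y^(p), z^(p)) = sum_{j_1<...<j_{2p}} sum_{theta subset [2p], |theta|=p}
     prod_{i in theta} y(j_i) prod_{i notin theta} z(j_i),
   written with T = {j_1,...,j_{2p}} and A = {j_i | i in theta}. *)
Definition Hform (R : comRingType) (N p : nat) (y z : 'I_N -> R) : R :=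
  \sum_(T : {set 'I_N} | #|T| == (2 * p)%N)
    \sum_(A : {set 'I_N} | (A \subset T) && (#|A| == p))
      (\prod_(i in A) y i) * (\prod_(i in T :\: A) z i).

From mathcomp Require Import all_boot all_order all_algebra all_fingroup all_solvable all_field.
From mathcomp Require Import ring.
Set Implicit Arguments. Unset Strict Implicit. Unset Printing Implicit Defensive.
Import GRing.Theory.

(* Testing the moment hypothesis against the indicator polynomials
   1 - (X - c)^(p-1) shows that every fibre of t |-> (x t, y t, z t) has size
   divisible by p.  Hence some fixed-point-free permutation s of order p
   preserves x, y and z.  Over F_p a sum over subsets whose terms are invariant
   under s equals the sum over s-stable subsets, since the others fall into
   s-orbits of size p.  An s-stable 2p-set is a union of two s-orbits O_a, O_b,
   and the product of an s-invariant v over an orbit O_a is v(a)^p = v(a).  So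
   both sides reduce to a sum, over such O_a :|: O_b, of y(a) z(b) + y(b) z(a). *)

(* Cyclic shift inside each block [m p, m p + p) of consecutive integers. *)
Definition block_succ (p k : nat) := k %/ p * p + k.+1 %% p.

Lemma iter_block_succ p n k : 0 < p -> iter n (block_succ p) k = k %/ p * p + (k + n) %% p.
Proof.
move=> p_gt0; elim: n => [|n IHn]; first by rewrite addn0 -divn_eq.
rewrite iterS IHn /block_succ divnMDl // (divn_small (ltn_pmod _ p_gt0)) addn0 -addnS modnMDl.
by rewrite -addn1 modnDml addn1 addnS.
Qed.

Lemma block_succ_ltn p m k : 0 < p -> p %| m -> k < m -> block_succ p k < m.
Proof.
move=> p_gt0 /dvdnP[m' ->] km.
have lt_km' : k %/ p < m' by rewrite ltn_divLR.
apply: (@leq_trans ((k %/ p).+1 * p)); last by rewrite leq_mul2r lt_km' orbT.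
by rewrite /block_succ mulSn addnC ltn_add2r ltn_pmod.
Qed.

Lemma block_succ_neq p k : 1 < p -> block_succ p k != k.
Proof.
move=> p_gt1; apply: contraTneq p_gt1; rewrite {2}(divn_eq k p) => /addnI.
by move/eqP; rewrite eqn_mod_dvd // subSnn dvdn1 => /eqP->.
Qed.

Lemma exists_perm_order_fpf (p : nat) (T : finType) (K : eqType) (key : T -> K) :
    1 < p -> (forall t, p %| #|[set u | key u == key t]|) ->
  exists s : {perm T},
    [/\ (s ^+ p)%g = 1%g, forall t, s t != t & forall t, key (s t) = key t].
Proof.
(* Enumerate each fibre of key and shift cyclically its blocks of p entries. *)
move=> p_gt1 p_dvd; have p_gt0 := ltnW p_gt1.
pose e t := enum [set u | key u == key t].
pose sig t := nth t (e t) (block_succ p (index t (e t))).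
have e_uniq t : uniq (e t) by apply: enum_uniq.
have mem_e t u : (u \in e t) = (key u == key t) by rewrite mem_enum inE.
have index_ltn t : index t (e t) < size (e t) by rewrite index_mem mem_e.
have succ_ltn t : block_succ p (index t (e t)) < size (e t).
  by rewrite block_succ_ltn // -cardE.
have key_sig t : key (sig t) = key t by apply/eqP; rewrite -mem_e mem_nth.
have e_sig t : e (sig t) = e t by rewrite /e key_sig.
have index_sig t : index (sig t) (e t) = block_succ p (index t (e t)).
  by rewrite index_uniq.
have e_iter n t : e (iter n sig t) = e t by elim: n => //= n IHn; rewrite e_sig.
have index_iter n t : index (iter n sig t) (e t) = iter n (block_succ p) (index t (e t)).
  by elim: n => //= n IHn; rewrite -IHn -(e_iter n t) index_sig.
have sig_order t : iter p sig t = t.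
  have mem_iter : iter p sig t \in e t by rewrite -(e_iter p t) mem_e.
  move/(congr1 (nth t (e t))): (index_iter p t).
  by rewrite iter_block_succ // modnDr -divn_eq !nth_index ?mem_iter ?mem_e.
have sig_inj : injective sig.
  by apply: (can_inj (g := iter p.-1 sig)) => t; rewrite -iterSr prednK.
exists (perm sig_inj); split=> [|t|t]; rewrite ?permE //.
  by apply/permP => t; rewrite permX perm1 (eq_iter (permE sig_inj)).
have := block_succ_neq (index t (e t)) p_gt1.
by rewrite -index_sig; apply: contra_neq => ->.
Qed.

Local Open Scope ring_scope.

Lemma card_porbit_prime (p : nat) (T : finType) (s : {perm T}) x :
  prime p -> (s ^+ p)%g = 1%g -> s x != x -> #|porbit s x| = p.
Proof.
move=> p_pr sp sx_x; have: (#|porbit s x| %| p)%N.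
  rewrite (_ : porbit s x = orbit 'P <[s]> x) ?porbit.unlock // card_orbit.
  by apply: dvdn_trans (dvdn_indexg _ _) _; rewrite -orderE order_dvdn sp.
apply/(prime_nt_dvdP p_pr); apply: contra sx_x => /cards1P[y def_y].
have := mem_porbit s 1 x; have := porbit_id s x.
by rewrite expg1 def_y !inE => /eqP-> /eqP->.
Qed.

Lemma porbit_invariant (T : finType) (V : Type) (s : {perm T}) (F : T -> V) :
  (forall t, F (s t) = F t) -> forall x, {in porbit s x, forall t, F t = F x}.
Proof.
move=> sF x _ /porbitP[i ->]; elim: i => [|i IHi]; first by rewrite expg0 perm1.
by rewrite expgSr permM sF.
Qed.

Lemma imset_porbit (T : finType) (s : {perm T}) x : s @: porbit s x = porbit s x.
Proof.
apply/eqP; rewrite eqEcard card_imset ?leqnn ?andbT; last exact: perm_inj.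
by apply/subsetP => _ /imsetP[t /porbitP[i ->] ->]; rewrite -permM -expgSr mem_porbit.
Qed.

Lemma porbit_subset (T : finType) (s : {perm T}) (A : {set T}) x :
  s @: A = A -> x \in A -> porbit s x \subset A.
Proof.
move=> sA xA; apply/subsetP => _ /porbitP[i ->].
elim: i => [|i IHi]; first by rewrite expg0 perm1.
by rewrite expgSr permM -sA imset_f.
Qed.

Lemma disjoint_porbits (T : finType) (s : {perm T}) x y :
  porbit s x != porbit s y -> [disjoint porbit s x & porbit s y].
Proof.
apply: contraR => /pred0Pn[u /andP[]].
by rewrite /= -!eq_porbit_mem => /eqP <- /eqP <-.
Qed.

Lemma sum_perm_fixed (R : nzRingType) (p : nat) (T : finType) (s : {perm T})
    (P : pred T) (F : T -> R) :
    p \in [pchar R] -> (s ^+ p)%g = 1%g ->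
    (forall t, P (s t) = P t) -> (forall t, F (s t) = F t) ->
  \sum_(t | P t) F t = \sum_(t | P t && (s t == t)) F t.
Proof.
(* The non-fixed points split into s-orbits of size p, each contributing p F = 0. *)
move=> pcharRp sp sP sF.
rewrite (bigID (fun t => s t == t)) /= [X in _ + X](_ : _ = 0) ?addr0 //.
set Q := [set t | P t && (s t != t)]; set orbits := [set porbit s t | t in Q].
have coverQ : cover orbits = Q.
  apply/setP => t; apply/bigcupP/idP => [[_ /imsetP[u uQ ->] tu] | tQ].
    have sQ v : (s v \in Q) = (v \in Q) by rewrite !inE sP (inj_eq perm_inj).
    by rewrite (porbit_invariant (F := fun v => v \in Q) sQ tu).
  by exists (porbit s t); [apply: imset_f | apply: porbit_id].
rewrite (eq_bigl [in cover orbits]) => [|t]; last by rewrite /= coverQ inE.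
rewrite big_trivIset; last first.
  apply/trivIsetP => _ _ /imsetP[u _ ->] /imsetP[v _ ->]; exact: disjoint_porbits.
apply: big1 => _ /imsetP[u uQ ->]; rewrite (eq_bigr (fun=> F u)).
  rewrite sumr_const (card_porbit_prime (pcharf_prime pcharRp)) ?mulrn_pchar //.
  by move: uQ; rewrite inE => /andP[].
exact: porbit_invariant.
Qed.

Lemma imset_permD (T : finType) (s : {perm T}) (A B : {set T}) :
  s @: (A :\: B) = s @: A :\: s @: B.
Proof. by rewrite -!preim_permV preimsetD. Qed.

Lemma card_imset_perm (T : finType) (s : {perm T}) (A : {set T}) : #|s @: A| = #|A|.
Proof. by apply/card_imset/perm_inj. Qed.

Lemma imset_permS (T : finType) (s : {perm T}) (A B : {set T}) :
  (s @: A \subset s @: B) = (A \subset B).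
Proof.
apply/idP/idP => [/subsetP sAB|/imsetS//]; apply/subsetP => t tA.
by rewrite -(mem_imset _ _ (@perm_inj _ s)) sAB ?imset_f.
Qed.

Lemma prod_imset_perm (R : comPzSemiRingType) (T : finType) (s : {perm T})
    (v : T -> R) (A : {set T}) :
  (forall t, v (s t) = v t) -> \prod_(t in s @: A) v t = \prod_(t in A) v t.
Proof.
move=> sv; rewrite big_imset /=; last by move=> ? ? _ _ /perm_inj.
by apply: eq_bigr => t _; rewrite sv.
Qed.

Lemma sum_subsets_perm_fixed (R : nzRingType) (p : nat) (T : finType) (s : {perm T})
    (P : pred {set T}) (F : {set T} -> R) :
    p \in [pchar R] -> (s ^+ p)%g = 1%g ->
    (forall A : {set T}, P (s @: A) = P A) -> (forall A : {set T}, F (s @: A) = F A) ->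
  \sum_(A | P A) F A = \sum_(A | P A && (s @: A == A)) F A.
Proof.
move=> pcharRp sp sP sF; have setpermE (A : {set T}) : actperm 'P^* s A = s @: A.
  by rewrite actpermE; apply: setactE.
have sp' : (actperm 'P^* s ^+ p)%g = 1%g by rewrite -morphX ?inE // sp morph1.
rewrite (sum_perm_fixed pcharRp sp') => [|A|A]; rewrite ?setpermE //.
by apply: eq_bigl => A; rewrite setpermE.
Qed.

Definition subset_split_sum (R : comPzSemiRingType) (T : finType) (k : nat)
    (y z : T -> R) (C : {set T}) : R :=
  \sum_(A : {set T} | (A \subset C) && (#|A| == k))
    (\prod_(i in A) y i) * (\prod_(i in C :\: A) z i).

Lemma subset_split_sum_imset_perm (R : comPzSemiRingType) (T : finType) (s : {perm T})
    (k : nat) (y z : T -> R) (C : {set T}) :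
    (forall t, y (s t) = y t) -> (forall t, z (s t) = z t) ->
  subset_split_sum k y z (s @: C) = subset_split_sum k y z C.
Proof.
move=> sy sz; rewrite /subset_split_sum (reindex_inj (imset_inj (@perm_inj _ s))) /=.
apply: eq_big => [A|A _]; first by rewrite imset_permS card_imset_perm.
by rewrite -imset_permD !prod_imset_perm.
Qed.

Section PrimeOrderFixedPointFree.

Variables (p : nat) (T : finType) (s : {perm T}) (y z : T -> 'F_p).
Hypotheses (p_pr : prime p) (sp : (s ^+ p)%g = 1%g) (s_fpf : forall t, s t != t).
Hypotheses (sy : forall t, y (s t) = y t) (sz : forall t, z (s t) = z t).

Lemma card_porbit x : #|porbit s x| = p.
Proof. exact: card_porbit_prime. Qed.

Lemma stable_card_prime (A : {set T}) x :
  s @: A = A -> #|A| = p -> x \in A -> A = porbit s x.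
Proof.
move=> sA cardA xA; apply/esym/eqP.
by rewrite eqEcard porbit_subset //= card_porbit cardA.
Qed.

Lemma stable_card_double (A : {set T}) :
    s @: A = A -> #|A| = (2 * p)%N ->
  exists a b, porbit s a != porbit s b /\ A = porbit s a :|: porbit s b.
Proof.
move=> sA cardA; have p_gt0 := prime_gt0 p_pr.
have /set0Pn[a aA] : A != set0 by rewrite -card_gt0 cardA muln_gt0.
have Oa_sub := porbit_subset sA aA.
set B := A :\: porbit s a.
have sB : s @: B = B by rewrite imset_permD sA imset_porbit.
have cardB : #|B| = p by rewrite cardsD (setIidPr Oa_sub) cardA card_porbit mul2n -addnn addnK.
have /set0Pn[b bB] : B != set0 by rewrite -card_gt0 cardB.
exists a, b; split.
  by rewrite eq_porbit_mem; apply: contraTN bB => bOa; rewrite !inE -porbit_sym bOa.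
by rewrite -(stable_card_prime sB cardB bB) -{1}(setIidPr Oa_sub) setID.
Qed.

Lemma stable_subsets_two_porbits a b (B : {set T}) :
  (B \subset porbit s a :|: porbit s b) && (#|B| == p) && (s @: B == B) =
    (B \in [set porbit s a; porbit s b]).
Proof.
apply/idP/set2P => [/andP[/andP[sub_B /eqP cardB] /eqP sB] | [] ->]; last first.
- by rewrite subsetUr imset_porbit card_porbit !eqxx.
- by rewrite subsetUl imset_porbit card_porbit !eqxx.
have /set0Pn[t tB] : B != set0 by rewrite -card_gt0 cardB prime_gt0.
rewrite (stable_card_prime sB cardB tB).
by case/setUP: (subsetP sub_B t tB); rewrite -eq_porbit_mem => /eqP; [left | right].
Qed.

Lemma prod_porbit_Fp (v : T -> 'F_p) x :
  (forall t, v (s t) = v t) -> \prod_(t in porbit s x) v t = v x.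
Proof.
move=> sv; rewrite (eq_bigr (fun=> v x)); last exact: porbit_invariant.
by rewrite prodr_const card_porbit; have := expf_card (v x); rewrite card_Fp.
Qed.

Lemma prod_two_porbits_Fp (v : T -> 'F_p) a b :
    porbit s a != porbit s b -> (forall t, v (s t) = v t) ->
  \prod_(t in porbit s a :|: porbit s b) v t = v a * v b.
Proof.
move=> Oab sv; rewrite (eq_bigl [predU porbit s a & porbit s b]) => [|t]; last first.
  by rewrite !inE.
by rewrite bigU ?disjoint_porbits //= !(prod_porbit_Fp _ sv).
Qed.

Lemma subset_split_sum_two_porbits a b : porbit s a != porbit s b ->
  subset_split_sum p y z (porbit s a :|: porbit s b) = y a * z b + y b * z a.
Proof.
move=> Oab; set C := _ :|: _.
have sC : s @: C = C by rewrite imsetU !imset_porbit.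
rewrite /subset_split_sum (sum_subsets_perm_fixed (pchar_Fp p_pr) sp); first last.
- by move=> A; rewrite -{1}sC -imset_permD !prod_imset_perm.
- by move=> A; rewrite -{1}sC imset_permS card_imset_perm.
rewrite (eq_bigl _ _ (stable_subsets_two_porbits a b)) big_setU1 ?big_set1 ?inE //=.
have CDa : C :\: porbit s a = porbit s b.
  by rewrite setDUl setDv set0U; apply/setDidPl; rewrite disjoint_sym disjoint_porbits.
have CDb : C :\: porbit s b = porbit s a.
  by rewrite setDUl setDv setU0; apply/setDidPl; rewrite disjoint_porbits.
by rewrite CDa CDb !prod_porbit_Fp.
Qed.

End PrimeOrderFixedPointFree.

Lemma expf_card_pred (F : finFieldType) (u : F) : u != 0 -> u ^+ #|F|.-1 = 1.
Proof.
move=> u_nz; apply: (mulIf u_nz); rewrite mul1r -exprSr prednK ?expf_card //.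
by apply/card_gt0P; exists u.
Qed.

Lemma finField_indicator (F : finFieldType) (u c : F) :
  1 - (u - c) ^+ #|F|.-1 = (u == c)%:R.
Proof.
have [->|uc] := eqVneq u c; last by rewrite expf_card_pred ?subrr // subr_eq0.
have : (0 < #|F|.-1)%N by rewrite -card_finField_unit; apply/card_gt0P; exists 1%g.
by rewrite subrr expr0n => /lt0n_neq0/negbTE ->; rewrite subr0.
Qed.

Lemma sum_horner_moments (R : comNzRingType) (p N : nat) (x y z : 'I_N -> R)
    (q1 q2 q3 : {poly R}) :
    (forall i a b : nat, (i <= p - 1)%N -> (a <= p - 1)%N -> (b <= p - 1)%N ->
       \sum_(t < N) x t ^+ i * y t ^+ a * z t ^+ b = 0) ->
    (size q1 <= p)%N -> (size q2 <= p)%N -> (size q3 <= p)%N ->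
  \sum_(t < N) q1.[x t] * q2.[y t] * q3.[z t] = 0.
Proof.
move=> moments0 q1p q2p q3p.
have expand t : q1.[x t] * q2.[y t] * q3.[z t] =
    \sum_(i < p) \sum_(j < p) \sum_(k < p)
      q1`_i * q2`_j * q3`_k * (x t ^+ i * y t ^+ j * z t ^+ k).
  rewrite (horner_coef_wide _ q1p) (horner_coef_wide _ q2p) (horner_coef_wide _ q3p).
  rewrite big_distrlr big_distrl; apply: eq_bigr => i _ /=.
  rewrite big_distrl; apply: eq_bigr => j _ /=.
  rewrite big_distrr; apply: eq_bigr => k _ /=; ring.
have le_pred (i : 'I_p) : (i <= p - 1)%N by rewrite subn1 -ltnS (ltn_predK (ltn_ord i)).
rewrite (eq_bigr _ (fun t _ => expand t)) exchange_big big1 // => i _.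
rewrite exchange_big big1 // => j _; rewrite exchange_big big1 // => k _.
by rewrite -mulr_sumr moments0 ?mulr0.
Qed.

Lemma card_fiber_eq0 (F : finFieldType) (N : nat) (x y z : 'I_N -> F) :
    (forall i a b : nat, (i <= #|F| - 1)%N -> (a <= #|F| - 1)%N -> (b <= #|F| - 1)%N ->
       \sum_(t < N) x t ^+ i * y t ^+ a * z t ^+ b = 0) ->
  forall a b c : F, #|[set t | (x t, y t, z t) == (a, b, c)]|%:R = 0 :> F.
Proof.
move=> moments0 a b c; pose ind (e : F) : {poly F} := 1 - ('X - e%:P) ^+ #|F|.-1.
have size_ind e : (size (ind e) <= #|F|)%N.
  rewrite (leq_trans (size_polyD _ _)) // size_polyN size_exp_XsubC size_poly1.
  by rewrite geq_max prednK ?leqnn ?andbT //; apply/card_gt0P; exists e.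
rewrite -[RHS](sum_horner_moments moments0 (size_ind a) (size_ind b) (size_ind c)).
rewrite -sum1_card natr_sum big_mkcond /=; apply: eq_bigr => t _.
by rewrite !hornerE !finField_indicator -!natrM !mulnb inE !xpair_eqE; case: (_ && _).
Qed.

Theorem lemma3p1 (p N : nat) (hp : prime p) (x y z : 'I_N -> 'F_p)
  (horth : forall i a b : nat, (i <= p - 1)%N -> (a <= p - 1)%N -> (b <= p - 1)%N ->
     \sum_(t < N) x t ^+ i * y t ^+ a * z t ^+ b = 0) :
  dderiv (dderiv (S_sym (2 * p) (N:=N)) y) z x = Hform p y z.
Proof.
have fiber_dvd t : (p %| #|[set u | (x u, y u, z u) == (x t, y t, z t)]|)%N.
  by rewrite (dvdn_pcharf (pchar_Fp hp)) card_fiber_eq0 // card_Fp.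
have [s [sp s_fpf s_key]] := exists_perm_order_fpf (prime_gt1 hp) fiber_dvd.
have [sx sy sz] : [/\ forall t, x (s t) = x t, forall t, y (s t) = y t
                   & forall t, z (s t) = z t].
  by split=> t; case: (s_key t).
have -> : Hform p y z = \sum_(C : {set 'I_N} | #|C| == (2 * p)%N) subset_split_sum p y z C.
  by [].
rewrite /dderiv /S_sym -!sumrB.
rewrite [LHS](sum_subsets_perm_fixed (pchar_Fp hp) sp) => [|C|C]; last 2 first.
- by rewrite card_imset_perm.
- by rewrite !prod_imset_perm // => t /=; rewrite ?sx ?sy ?sz.
rewrite [RHS](sum_subsets_perm_fixed (pchar_Fp hp) sp) => [|C|C]; last 2 first.
- by rewrite card_imset_perm.
- exact: subset_split_sum_imset_perm.
apply: eq_bigr => C /andP[/eqP cardC /eqP sC].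
have [a [b [Oab ->]]] := stable_card_double hp sp s_fpf sC cardC.
rewrite subset_split_sum_two_porbits // !prod_two_porbits_Fp // => [|t|t|t].
  ring.
all: by rewrite sx ?sy ?sz.
Qed.
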